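(* Let $(R,\mathfrak m)$ be a $d$-dimensional Noetherian local ring of prime characteristic $p>0$, and let $I_\bullet=\{I_q\}$ be a sequence of ideals indexed by powers $q$ of $p$ with $\mathfrak m^{cq}\subseteq I_q$ for some positive integer $c$ and all $q$. Let $x\in R$ be a nonzerodivisor and $L_\bullet=\{L_q\}$ a sequence of ideals with $I_q\subseteq L_q\subseteq(I_q:x)$ for all $q$. Then there is a constant $\gamma>0$ with \[\ell_R(R/I_q)-\ell_R(R/L_q)\le\gamma\cdot q^{d-1}\] for all powers $q$ of $p$.
   Context: $q$ ranges over the powers $p^e$, $e\ge0$. *)

From HB Require Import structures.
From mathcomp Require Import all_boot all_order all_algebra.
Set Implicit Arguments. Unset Strict Implicit. Unset Printing Implicit Defensive.
Import Order.TTheory GRing.Theory Num.Theory.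
Local Open Scope ring_scope.

Section CommAlg.
Variable R : comNzRingType.

Definition ideal_sub (I J : R -> Prop) : Prop := forall x, I x -> J x.

Definition ideal_ssub (I J : R -> Prop) : Prop :=
  ideal_sub I J /\ exists y, J y /\ ~ I y.

Definition is_ideal (I : R -> Prop) : Prop :=
  [/\ I 0, (forall a b, I a -> I b -> I (a + b)) & (forall r a, I a -> I (r * a))].

Definition colon (I : R -> Prop) (x : R) : R -> Prop := fun y => I (y * x).

Definition ideal_pow (m : R -> Prop) (n : nat) : R -> Prop :=
  fun y => forall J, is_ideal J ->
    (forall xs : seq R, size xs = n -> (forall z, z \in xs -> m z) -> J (\prod_(z <- xs) z)) ->
    J y.

Definition is_prime_ideal (P : R -> Prop) : Prop :=
  [/\ is_ideal P, ~ P 1 & forall a b, P (a * b) -> P a \/ P b].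

Definition noetherian : Prop :=
  forall f : nat -> R -> Prop, (forall n, is_ideal (f n)) ->
    (forall n, ideal_sub (f n) (f n.+1)) ->
    exists N, forall n, (N <= n)%N -> ideal_sub (f n) (f N).

Definition local_with (m : R -> Prop) : Prop :=
  [/\ is_ideal m, ~ m 1 & forall x, ~ m x -> exists y, x * y = 1].

Definition prime_chain (P : nat -> R -> Prop) (n : nat) : Prop :=
  (forall i, (i <= n)%N -> is_prime_ideal (P i)) /\
  (forall i, (i < n)%N -> ideal_ssub (P i) (P i.+1)).

Definition krull_dim (d : nat) : Prop :=
  (exists P, prime_chain P d) /\ (forall P n, prime_chain P n -> (n <= d)%N).

Definition ideal_chain_from (I : R -> Prop) (J : nat -> R -> Prop) (n : nat) : Prop :=
  [/\ (forall i, (i <= n)%N -> is_ideal (J i)),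
      (forall y, J 0%N y <-> I y),
      (forall y, J n y) &
      (forall i, (i < n)%N -> ideal_ssub (J i) (J i.+1))].

(* length_R(R/I) = n: the R-submodules of R/I are the ideals containing I, and
   n is the maximal length of a strict chain of such submodules *)
Definition length_quot (I : R -> Prop) (n : nat) : Prop :=
  (exists J, ideal_chain_from I J n) /\
  (forall J k, ideal_chain_from I J k -> (k <= n)%N).

End CommAlg.

(* Since L_q ⊆ (I_q : x), multiplication by x maps R / L_q onto (I_q + xR) / I_q, so
   ℓ(R/I_q) - ℓ(R/L_q) <= ℓ(R/(I_q + xR)) <= ℓ(R/(xR + m^(cq))).  A nonzerodivisor lies in no
   minimal prime, hence dim R/xR <= d - 1, and ℓ(R/(J + m^N)) grows at most like N^(dim R/J):
   by induction on dim R/J, choosing by prime avoidance y ∈ m that drops the dimension and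
   filtering J + m^N by the ideals J + m^N + (y^i). *)

From HB Require Import structures.
From mathcomp Require Import all_boot all_order all_algebra.
From mathcomp Require Import zify ring.
From Stdlib Require Import Classical ClassicalEpsilon FunctionalExtensionality PropExtensionality.
From Stdlib Require List.
Set Implicit Arguments. Unset Strict Implicit. Unset Printing Implicit Defensive.
Import Order.TTheory GRing.Theory Num.Theory.
Local Open Scope ring_scope.

Section Ideals.
Variable R : comNzRingType.
Implicit Types (I J K : R -> Prop) (a b r w y z : R).

Definition idealT : R -> Prop := fun _ => True.
Definition ideal_add I J : R -> Prop := fun z => exists a b, [/\ I a, J b & z = a + b].
Definition ideal_cap I J : R -> Prop := fun z => I z /\ J z.
Definition principal w : R -> Prop := fun z => exists r, z = r * w.

Lemma ideal_ext I J : ideal_sub I J -> ideal_sub J I -> I = J.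
Proof.
move=> hIJ hJI; apply: functional_extensionality => z.
by apply: propositional_extensionality; split; [apply: hIJ | apply: hJI].
Qed.

Lemma not_ideal_sub I J : ~ ideal_sub I J -> exists z, I z /\ ~ J z.
Proof.
move=> hIJ; apply: NNPP => hno; apply: hIJ => z hz.
by apply: NNPP => hnz; apply: hno; exists z.
Qed.

Lemma ideal_sub_ssub_or_eq I J : ideal_sub I J -> ideal_ssub I J \/ I = J.
Proof.
move=> hIJ; case: (classic (ideal_sub J I)) => hJI; first by right; apply: ideal_ext.
by left; split => //; apply: not_ideal_sub.
Qed.

Section IdealClosure.
Variable I : R -> Prop.
Hypothesis hI : is_ideal I.

Lemma ideal0 : I 0. Proof. by case: hI. Qed.
Lemma idealD a b : I a -> I b -> I (a + b). Proof. by case: hI => _ hD _; apply: hD. Qed.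
Lemma idealMl r a : I a -> I (r * a). Proof. by case: hI => _ _; apply. Qed.
Lemma idealMr r a : I a -> I (a * r). Proof. by rewrite mulrC; apply: idealMl. Qed.
Lemma idealN a : I a -> I (- a). Proof. by rewrite -mulN1r; apply: idealMl. Qed.
Lemma idealB a b : I a -> I b -> I (a - b). Proof. by move=> ha /idealN; apply: idealD. Qed.

Lemma idealDl a b : I a -> I (a + b) -> I b.
Proof. by move=> ha /idealB /(_ ha); rewrite addrAC subrr add0r. Qed.

Lemma idealDr a b : I b -> I (a + b) -> I a.
Proof. by move=> hb /idealB /(_ hb); rewrite addrK. Qed.

Lemma ideal_eqT : I 1 -> I = idealT.
Proof. by move=> h1; apply: ideal_ext => // z _; rewrite -(mulr1 z); apply: idealMl. Qed.

Lemma principal_sub w : I w -> ideal_sub (principal w) I.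
Proof. by move=> hw _ [r ->]; apply: idealMl. Qed.

End IdealClosure.

Lemma idealT_ideal : is_ideal idealT.
Proof. by split. Qed.

Lemma ideal_add_ideal I J : is_ideal I -> is_ideal J -> is_ideal (ideal_add I J).
Proof.
move=> hI hJ; split.
- by exists 0, 0; rewrite addr0; split => //; apply: ideal0.
- move=> _ _ [a1 [b1 [ha1 hb1 ->]]] [a2 [b2 [ha2 hb2 ->]]].
  by exists (a1 + a2), (b1 + b2); rewrite addrACA; split => //; apply: idealD.
- move=> r _ [a [b [ha hb ->]]].
  by exists (r * a), (r * b); rewrite mulrDr; split => //; apply: idealMl.
Qed.

Lemma ideal_cap_ideal I J : is_ideal I -> is_ideal J -> is_ideal (ideal_cap I J).
Proof.
move=> hI hJ; split.
- by split; apply: ideal0.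
- by move=> a b [ha1 ha2] [hb1 hb2]; split; apply: idealD.
- by move=> r a [ha1 ha2]; split; apply: idealMl.
Qed.

Lemma principal_ideal w : is_ideal (principal w).
Proof.
split.
- by exists 0; rewrite mul0r.
- by move=> _ _ [r1 ->] [r2 ->]; exists (r1 + r2); rewrite mulrDl.
- by move=> r _ [s ->]; exists (r * s); rewrite mulrA.
Qed.

Lemma colon_ideal I w : is_ideal I -> is_ideal (colon I w).
Proof.
move=> hI; split; rewrite /colon.
- by rewrite mul0r; apply: ideal0.
- by move=> a b ha hb; rewrite mulrDl; apply: idealD.
- by move=> r a ha; rewrite -mulrA; apply: idealMl.
Qed.

Lemma ideal_pow_ideal I n : is_ideal (ideal_pow I n).
Proof.
split.
- by move=> J hJ _; apply: ideal0.
- by move=> a b ha hb J hJ hgen; apply: idealD => //; [apply: ha | apply: hb].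
- by move=> r a ha J hJ hgen; apply: idealMl => //; apply: ha.
Qed.

Lemma ideal_pow_exp I y n : I y -> ideal_pow I n (y ^+ n).
Proof.
move=> hy J hJ hgen; have := hgen (nseq n y); rewrite size_nseq big_nseq.
have -> : iter n ( *%R y) 1 = y ^+ n by elim: n {hgen} => //= n ->; rewrite exprS.
by apply=> // z; rewrite mem_nseq => /andP[_ /eqP ->].
Qed.

Lemma principal_self w : principal w w.
Proof. by exists 1; rewrite mul1r. Qed.

Lemma ideal_addl I J a : is_ideal J -> I a -> ideal_add I J a.
Proof. by move=> hJ ha; exists a, 0; rewrite addr0; split => //; apply: ideal0. Qed.

Lemma ideal_addr I J b : is_ideal I -> J b -> ideal_add I J b.
Proof. by move=> hI hb; exists 0, b; rewrite add0r; split => //; apply: ideal0. Qed.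

Lemma ideal_add_sub I J K : is_ideal K -> ideal_sub I K -> ideal_sub J K ->
  ideal_sub (ideal_add I J) K.
Proof. by move=> hK hIK hJK _ [a [b [ha hb ->]]]; apply: idealD; auto. Qed.

Lemma ideal_addSl I J K : ideal_sub I J -> ideal_sub (ideal_add I K) (ideal_add J K).
Proof. by move=> hIJ _ [a [b [ha hb ->]]]; exists a, b; split => //; apply: hIJ. Qed.

Lemma ideal_addSr I J K : ideal_sub I J -> ideal_sub (ideal_add K I) (ideal_add K J).
Proof. by move=> hIJ _ [a [b [ha hb ->]]]; exists a, b; split => //; apply: hIJ. Qed.

Lemma ideal_capSl I J K : ideal_sub I J -> ideal_sub (ideal_cap I K) (ideal_cap J K).
Proof. by move=> hIJ z [hz hz']; split => //; apply: hIJ. Qed.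

Lemma ideal_add_idl I J : is_ideal I -> is_ideal J -> ideal_sub J I -> ideal_add I J = I.
Proof.
move=> hI hJ hJI; apply: ideal_ext; first exact: ideal_add_sub.
by move=> z; apply: ideal_addl.
Qed.

Lemma ideal_add_idr I J : is_ideal I -> is_ideal J -> ideal_sub I J -> ideal_add I J = J.
Proof.
move=> hI hJ hIJ; apply: ideal_ext; first exact: ideal_add_sub.
by move=> z; apply: ideal_addr.
Qed.

Lemma ideal_cap_idl I J : ideal_sub I J -> ideal_cap I J = I.
Proof. by move=> hIJ; apply: ideal_ext => [z []|z hz] //; split => //; apply: hIJ. Qed.

Lemma ideal_cap_idr I J : ideal_sub J I -> ideal_cap I J = J.
Proof. by move=> hJI; apply: ideal_ext => [z []|z hz] //; split => //; apply: hJI. Qed.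

Lemma ideal_addAC I J K : ideal_add (ideal_add I J) K = ideal_add (ideal_add I K) J.
Proof.
by apply: ideal_ext => _ [_ [c [[a [b [ha hb ->]]] hc ->]]];
  exists (a + c), b; rewrite addrAC; split => //; exists a, c.
Qed.

End Ideals.

Arguments idealT {R}.
Arguments idealT_ideal {R}.

Section Lengths.
Variable R : comNzRingType.
Implicit Types (I J K X Y Z A B : R -> Prop) (C : nat -> R -> Prop) (a w y : R).

Definition ideal_chain X Z C (n : nat) :=
  [/\ forall i, (i <= n)%N -> is_ideal (C i), C 0%N = X, C n = Z &
      forall i, (i < n)%N -> ideal_ssub (C i) (C i.+1)].

(* ℓ(Z / X) <= k *)
Definition length_le X Z (k : nat) := forall C n, ideal_chain X Z C n -> (n <= k)%N.

Definition chain_cons X C : nat -> R -> Prop := fun i => if i is j.+1 then C j else X.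
Definition chain_rcons C (s : nat) Z : nat -> R -> Prop := fun i => if (i <= s)%N then C i else Z.

Lemma ideal_chain0 X : is_ideal X -> ideal_chain X X (fun=> X) 0.
Proof. by split. Qed.

Lemma ideal_chain_cons X Y Z C n : ideal_chain Y Z C n -> is_ideal X -> ideal_ssub X Y ->
  ideal_chain X Z (chain_cons X C) n.+1.
Proof.
case=> hCi hC0 hCn hCs hX hXY; split => //.
- by case=> [|i] hi //; apply: hCi.
- by case=> [|i] hi /=; [rewrite hC0 | apply: hCs].
Qed.

Lemma ideal_chain_rcons X Y Z C s : ideal_chain X Y C s -> is_ideal Z -> ideal_ssub Y Z ->
  ideal_chain X Z (chain_rcons C s Z) s.+1.
Proof.
case=> hCi hC0 hCn hCs hZ hYZ; split; rewrite /chain_rcons ?leq0n ?ltnn //.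
- by move=> i hi; case: ifP => his //; apply: hCi.
- move=> i; rewrite ltnS => hi; rewrite hi; case: ifP => [his | /negbT his].
  + exact: hCs.
  + have -> : i = s by lia.
    by rewrite hCn.
Qed.

Lemma ideal_chain_mono X Z C n i j : ideal_chain X Z C n ->
  (i <= j)%N -> (j <= n)%N -> ideal_sub (C i) (C j).
Proof.
case=> _ _ _ hCs; elim: j => [|j IH] hij hj; first by move: hij; rewrite leqn0 => /eqP ->.
case: (ltngtP i j.+1) hij => // [hi _ | -> _ //].
by move=> z /(IH hi (ltnW hj)); case: (hCs j hj) => hsub _; apply: hsub.
Qed.

Lemma ideal_chain_grow X A B C s : ideal_chain X A C s -> is_ideal B -> ideal_sub A B ->
  exists s' C', [/\ ideal_chain X B C' s', (s <= s')%N & ideal_ssub A B -> (s < s')%N].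
Proof.
move=> hC hB hAB; case: (ideal_sub_ssub_or_eq hAB) => [hs | <-].
- exists s.+1, (chain_rcons C s B).
  by split; [exact: ideal_chain_rcons hC hB hs | | move].
- by exists s, C; split => // -[_ [y []]].
Qed.

Lemma length_leTT : length_le (@idealT R) idealT 0.
Proof. by move=> C [|n] // [_ hC0 _ /(_ 0%N erefl)]; rewrite hC0 => -[_ [y [_ /(_ I) []]]]. Qed.

Lemma length_leW X Z k k' : length_le X Z k -> (k <= k')%N -> length_le X Z k'.
Proof. by move=> hk hkk' C n hC; apply: leq_trans (hk _ _ hC) hkk'. Qed.

Lemma length_le_top_sub X Y Z k : ideal_sub Y Z -> is_ideal Z ->
  length_le X Z k -> length_le X Y k.
Proof.
move=> hYZ hZ hk C n hC; case: (ideal_sub_ssub_or_eq hYZ) => [hs | eYZ].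
  exact/ltnW/(hk _ _ (ideal_chain_rcons hC hZ hs)).
by move: hC; rewrite eYZ; apply: hk.
Qed.

Lemma length_le_bot_sup X Y Z k : ideal_sub X Y -> is_ideal X ->
  length_le X Z k -> length_le Y Z k.
Proof.
move=> hXY hX hk C n hC; case: (ideal_sub_ssub_or_eq hXY) => [hs | eXY].
  exact/ltnW/(hk _ _ (ideal_chain_cons hC hX hs)).
by move: hC; rewrite -eXY; apply: hk.
Qed.

(* Modular law: A ⊆ B, A ∩ Y = B ∩ Y and A + Y = B + Y force A = B. *)
Lemma modular_ssub A B Y : is_ideal A -> is_ideal B -> is_ideal Y -> ideal_ssub A B ->
  ideal_ssub (ideal_cap A Y) (ideal_cap B Y) \/ ideal_ssub (ideal_add A Y) (ideal_add B Y).
Proof.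
move=> hA hB hY [hAB [y [hBy hAy]]].
case: (ideal_sub_ssub_or_eq (ideal_capSl (K := Y) hAB)) => [|ecap]; first by left.
case: (ideal_sub_ssub_or_eq (ideal_addSl (K := Y) hAB)) => [|eadd]; first by right.
exfalso; apply: hAy.
have [u [v [hu hv hyuv]]] : ideal_add A Y y by rewrite eadd; apply: ideal_addl.
have hBv : B v by apply: (idealDl hB (hAB _ hu)); rewrite -hyuv.
have [hAv _] : ideal_cap A Y v by rewrite ecap.
by rewrite hyuv; apply: idealD.
Qed.

Lemma length_le_add X Y Z k1 k2 : is_ideal X -> is_ideal Y -> is_ideal Z ->
  ideal_sub X Y -> ideal_sub Y Z -> length_le X Y k1 -> length_le Y Z k2 ->
  length_le X Z (k1 + k2)%N.
Proof.
move=> hX hY hZ hXY hYZ hk1 hk2 C n hC; have [hCi hC0 hCn hCs] := hC.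
(* C_j ∩ Y and C_j + Y grow into chains X..Y and Y..Z, at least one of them strictly at each step. *)
have split_chain j : (j <= n)%N -> exists s t C1 C2, [/\ (j <= s + t)%N,
    ideal_chain X (ideal_cap (C j) Y) C1 s & ideal_chain Y (ideal_add (C j) Y) C2 t].
  elim: j => [|j IH] hj.
    exists 0%N, 0%N, (fun=> X), (fun=> Y).
    by rewrite hC0 ideal_cap_idl // ideal_add_idr //; split => //; apply: ideal_chain0.
  have [s [t [C1 [C2 [hst h1 h2]]]]] := IH (ltnW hj).
  have [hCj hCj1] := (hCi j (ltnW hj), hCi j.+1 hj).
  have [hsub _] := hCs j hj.
  have [s' [C1' [h1' hs hs']]] :=
    ideal_chain_grow h1 (ideal_cap_ideal hCj1 hY) (ideal_capSl (K := Y) hsub).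
  have [t' [C2' [h2' ht ht']]] :=
    ideal_chain_grow h2 (ideal_add_ideal hCj1 hY) (ideal_addSl (K := Y) hsub).
  exists s', t', C1', C2'; split => //.
  by case: (modular_ssub hCj hCj1 hY (hCs j hj)) => [/hs' | /ht'] ?; lia.
have [s [t [C1 [C2 [hst h1 h2]]]]] := split_chain n (leqnn n).
rewrite hCn ideal_cap_idr // in h1; rewrite hCn ideal_add_idl // in h2.
exact: leq_trans hst (leq_add (hk1 _ _ h1) (hk2 _ _ h2)).
Qed.

Lemma colon_ssub A I J w : is_ideal I -> is_ideal J -> ideal_sub A I ->
  ideal_sub J (ideal_add A (principal w)) -> ideal_ssub I J -> ideal_ssub (colon I w) (colon J w).
Proof.
move=> hI hJ hAI hJw [hIJ [z [hJz hIz]]]; split; first by move=> y; apply: hIJ.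
have [a [_ [ha [r ->] ez]]] := hJw z hJz.
exists r; split; rewrite /colon.
- by apply: (idealDl hJ (hIJ _ (hAI _ ha))); rewrite -ez.
- by move=> hr; apply: hIz; rewrite ez; apply: idealD => //; apply: hAI.
Qed.

(* r ↦ r w induces R / (A : w) ≅ (A + (w)) / A, which contains B / A. *)
Lemma length_le_colon A B w k : is_ideal A -> is_ideal B -> ideal_sub A B ->
  ideal_sub B (ideal_add A (principal w)) -> length_le (colon A w) idealT k -> length_le A B k.
Proof.
move=> hA hB hAB hBw hk C n hC; have [hCi hC0 hCn hCs] := hC.
have hk' : length_le (colon A w) (colon B w) k by apply: length_le_top_sub hk.
apply: (hk' (fun i => colon (C i) w)); split; [|by rewrite hC0|by rewrite hCn|].
- by move=> i hi; apply/colon_ideal/hCi.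
- move=> i hi; apply: (colon_ssub (A := A)) (hCs i hi); [exact: hCi (ltnW hi) | exact: hCi |..].
  + by rewrite -hC0; apply: ideal_chain_mono hC _ (ltnW hi).
  + by move=> z hz; apply/hBw; rewrite -hCn; apply: ideal_chain_mono hC hi _ z hz.
Qed.

(* Each factor (K + (y^i)) / (K + (y^(i+1))) is a quotient of R / (K + (y)). *)
Lemma length_le_principal_pow K y k : is_ideal K ->
  length_le (ideal_add K (principal y)) idealT k ->
  forall n, length_le (ideal_add K (principal (y ^+ n))) idealT (n * k)%N.
Proof.
move=> hK hk; elim=> [|n IH].
  rewrite (@ideal_eqT _ _ (ideal_add_ideal hK (principal_ideal _))); first exact: length_leTT.
  by apply: ideal_addr => //; rewrite expr0; apply: principal_self.
have hKn := ideal_add_ideal hK (principal_ideal (y ^+ n)).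
have hKn1 := ideal_add_ideal hK (principal_ideal (y ^+ n.+1)).
have sub_pow : ideal_sub (ideal_add K (principal (y ^+ n.+1))) (ideal_add K (principal (y ^+ n))).
  by apply/ideal_addSr/(principal_sub (principal_ideal _)); exists y; rewrite exprS.
rewrite mulSn; apply: (length_le_add hKn1 hKn idealT_ideal sub_pow) => //.
apply: (length_le_colon (w := y ^+ n)) => //.
  by apply: ideal_addSl => z hz; apply: ideal_addl => //; apply: principal_ideal.
apply: length_le_bot_sup hk; last exact: ideal_add_ideal hK (principal_ideal _).
move=> _ [a [_ [ha [r ->] ->]]]; rewrite /colon.
exists (a * y ^+ n), (r * y ^+ n.+1); split; first exact: idealMr.
  by exists r.
by rewrite mulrDl exprS mulrA.
Qed.

Lemma length_quot_le I l : length_quot I l -> length_le I idealT l.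
Proof.
move=> [_ hmax] C n [hCi hC0 hCn hCs]; apply: (hmax C n); split => // y.
- by rewrite hC0.
- by rewrite hCn.
Qed.

Lemma length_quot_chain I l : length_quot I l -> exists C, ideal_chain I idealT C l.
Proof.
move=> [[J [hJi hJ0 hJn hJs]] _]; exists J; split => //.
- by apply: ideal_ext => y /hJ0.
- by apply: ideal_ext => y // _; apply: hJn.
Qed.

Lemma length_quot_le_colon I L x lI lL k : is_ideal I -> is_ideal L ->
  ideal_sub I L -> ideal_sub L (colon I x) -> length_quot I lI -> length_quot L lL ->
  length_le (ideal_add I (principal x)) idealT k -> (lI <= lL + k)%N.
Proof.
move=> hI hL hIL hLx hlI hlL hk; have [C hC] := length_quot_chain hlI.
have hIx := ideal_add_ideal hI (principal_ideal x).
have hIIx : ideal_sub I (ideal_add I (principal x)).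
  by move=> z; apply: ideal_addl; apply: principal_ideal.
apply: (length_le_add hI hIx idealT_ideal hIIx _ _ hk hC) => //.
apply: (length_le_colon (w := x)) => //.
by apply: length_le_bot_sup (length_quot_le hlL); first exact: hLx.
Qed.

End Lengths.

Arguments length_leTT {R}.

Section Primes.
Variable R : comNzRingType.
Implicit Types (I J K P Q : R -> Prop) (a b r s y z : R).

Definition prime_cover J (Ps : list (R -> Prop)) :=
  (forall P, List.In P Ps -> is_prime_ideal P /\ ideal_sub J P) /\
  (forall P, is_prime_ideal P -> ideal_sub J P -> exists2 Q, List.In Q Ps & ideal_sub Q P).

Lemma prime_cover_split J a b Pa Pb : is_ideal J -> J (a * b) ->
  prime_cover (ideal_add J (principal a)) Pa -> prime_cover (ideal_add J (principal b)) Pb ->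
  prime_cover J (List.app Pa Pb).
Proof.
move=> hJ hab [hPa1 hPa2] [hPb1 hPb2]; split.
  move=> P /List.in_app_iff [/hPa1 | /hPb1] [hP hsub]; split => // z hz;
    by apply: hsub; apply: ideal_addl => //; apply: principal_ideal.
move=> P hP hJP; have [hPi _ hPm] := hP.
have hJcP c : P c -> ideal_sub (ideal_add J (principal c)) P.
  by move=> hc; apply: ideal_add_sub => //; apply: principal_sub.
case: (hPm a b (hJP _ hab)) => /hJcP hsub.
- by have [Q hQ hQP] := hPa2 P hP hsub; exists Q => //; apply: List.in_or_app; left.
- by have [Q hQ hQP] := hPb2 P hP hsub; exists Q => //; apply: List.in_or_app; right.
Qed.

Lemma zero_divisor_of_mulrX_eq0 a s n : s <> 0 -> s * a ^+ n = 0 ->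
  exists2 y, y <> 0 & a * y = 0.
Proof.
elim: n s => [|n IH] s hs; first by rewrite expr0 mulr1.
case: (classic (s * a ^+ n = 0)) => [hsa0 _ | hsa e]; first exact: IH hsa0.
by exists (s * a ^+ n); rewrite // mulrCA -exprS.
Qed.

Section PrimeAvoidance.
Variable I : R -> Prop.
Hypothesis hI : is_ideal I.

Lemma exists_cap_notin_prime P Qs : is_prime_ideal P -> ~ ideal_sub I P ->
  (forall Q, List.In Q Qs -> is_ideal Q /\ ~ ideal_sub Q P) ->
  exists b, [/\ I b, ~ P b & forall Q, List.In Q Qs -> Q b].
Proof.
move=> hP /not_ideal_sub [g [hg hgP]]; elim: Qs => [|Q Qs IH] hQs.
  by exists g; split.
have [b [hb hbP hbQs]] := IH (fun Q' hQ' => hQs Q' (or_intror hQ')).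
have [hQ /not_ideal_sub [c [hc hcP]]] := hQs Q (or_introl erefl).
exists (c * b); split; first exact: idealMl.
  by case: hP => _ _ /[apply] -[].
move=> Q' [<- | hQ']; first exact: idealMr.
by apply: idealMl; [exact: proj1 (hQs Q' (or_intror hQ')) | exact: hbQs].
Qed.

Lemma prime_avoidance Ps : (forall P, List.In P Ps -> is_prime_ideal P /\ ~ ideal_sub I P) ->
  exists y, I y /\ forall P, List.In P Ps -> ~ P y.
Proof.
have [n] : exists n, List.length Ps = n by exists (List.length Ps).
elim: n Ps => [|n IH] [|P Ps] //= hn hPs; first by exists 0; split => //; apply: ideal0.
move: hn => [hn].
have [hP hIP] := hPs P (or_introl erefl).
case: (classic (exists2 Q, List.In Q Ps & ideal_sub Q P)) => [[Q hQ hQP] | hincomp].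
  (* Avoiding P implies avoiding Q, so Q can be dropped. *)
  have [l1 [l2 eQ]] := List.in_split Q Ps hQ.
  have [y [hy hyP]] : exists y, I y /\ forall P', List.In P' (P :: List.app l1 l2) -> ~ P' y.
    apply: IH; first by rewrite /= List.length_app -hn eQ List.length_app /=; lia.
    move=> P' [<- | hP'] //; apply: hPs; right; rewrite eQ.
    by case/List.in_app_iff: hP' => ?; apply: List.in_or_app; [left | right; right].
  exists y; split => // P' [<- | ]; first by apply: hyP; left.
  rewrite eQ => /List.in_app_iff [hP' | [<- | hP']].
  - by apply: hyP; right; apply: List.in_or_app; left.
  - by move=> /hQP; apply: hyP; left.
  - by apply: hyP; right; apply: List.in_or_app; right.
(* If a avoids Ps but not P, add some b ∈ I ∩ ⋂ Ps outside P. *)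
have [a [ha haPs]] := IH Ps hn (fun P' hP' => hPs P' (or_intror hP')).
case: (classic (P a)) => hPa; last by exists a; split => // P' [<- | /haPs].
have [b [hb hbP hbPs]] : exists b, [/\ I b, ~ P b & forall Q, List.In Q Ps -> Q b].
  apply: exists_cap_notin_prime => // Q hQ; split; first by case: (hPs Q (or_intror hQ)) => -[].
  by move=> hQP; apply: hincomp; exists Q.
have hPi : is_ideal P by case: hP.
exists (a + b); split; first exact: idealD.
move=> P' [<- | hP'] hab; first exact/hbP/(idealDl hPi hPa).
have hP'i : is_ideal P' by case: (hPs P' (or_intror hP')) => -[].
exact/(haPs P' hP')/(idealDr hP'i (hbPs P' hP')).
Qed.

End PrimeAvoidance.

Section Noetherian.
Hypothesis hN : noetherian R.

Lemma noetherian_maximal (Pr : (R -> Prop) -> Prop) : (exists2 J, is_ideal J & Pr J) ->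
  exists J, [/\ is_ideal J, Pr J &
    forall K, is_ideal K -> Pr K -> ideal_sub J K -> ideal_sub K J].
Proof.
move=> [J0 hJ0 hP0]; apply: NNPP => hno.
have grow J : is_ideal J /\ Pr J ->
    exists K, (is_ideal K /\ Pr K) /\ ideal_sub J K /\ ~ ideal_sub K J.
  move=> [hJ hPJ]; apply: NNPP => hK; apply: hno; exists J; split => // K hK1 hK2 hK3.
  by apply: NNPP => hK4; apply: hK; exists K.
pose T := {J : R -> Prop | is_ideal J /\ Pr J}.
pose next (t : T) : T :=
  let (K, hK) := constructive_indefinite_description _ (grow _ (proj2_sig t)) in
  exist _ K (proj1 hK).
have hnext t : ideal_sub (sval t) (sval (next t)) /\ ~ ideal_sub (sval (next t)) (sval t).
  by rewrite /next; case: constructive_indefinite_description => K [hK []].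
pose t0 : T := exist _ J0 (conj hJ0 hP0).
have [N hstab] := @hN (fun n => sval (iter n next t0))
  (fun n => proj1 (proj2_sig (iter n next t0))) (fun n => proj1 (hnext (iter n next t0))).
exact: proj2 (hnext (iter N next t0)) (hstab N.+1 (leqnSn N)).
Qed.

Lemma exists_prime_disjoint J (S : R -> Prop) : is_ideal J -> S 1 ->
  (forall a b, S a -> S b -> S (a * b)) -> (forall z, J z -> ~ S z) ->
  exists P, [/\ is_prime_ideal P, ideal_sub J P & forall z, P z -> ~ S z].
Proof.
move=> hJ hS1 hSM hJS.
have [P [hP [hJP hPS] hmax]] :=
  noetherian_maximal (Pr := fun K => ideal_sub J K /\ forall z, K z -> ~ S z)
    (ex_intro2 _ _ J hJ (conj (fun _ h => h) hJS)).
exists P; split => //; split => //; first by move/hPS; apply.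
move=> a b hab; apply: NNPP => hn.
have meet c : ~ P c -> exists u r, P u /\ S (u + r * c).
  move=> hc; apply: NNPP => hno; apply/hc/(hmax _ (ideal_add_ideal hP (principal_ideal c))).
  - split; first by move=> z hz; apply: ideal_addl; [apply: principal_ideal | apply: hJP].
    by move=> _ [u [_ [hu [r ->] ->]]] hs; apply: hno; exists u, r.
  - by move=> z; apply: ideal_addl; apply: principal_ideal.
  - by apply: ideal_addr => //; apply: principal_self.
have [u1 [r1 [hu1 hs1]]] := meet a (fun h => hn (or_introl h)).
have [u2 [r2 [hu2 hs2]]] := meet b (fun h => hn (or_intror h)).
apply: (hPS _ _ (hSM _ _ hs1 hs2)).
rewrite (_ : _ * _ = u1 * (u2 + r2 * b) + (r1 * a) * u2 + (r1 * r2) * (a * b)); last by ring.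
by apply: (idealD hP); [apply: (idealD hP) |]; [apply: idealMr | apply: idealMl | apply: idealMl].
Qed.

Lemma exists_prime_cover J : is_ideal J -> exists Ps, prime_cover J Ps.
Proof.
move=> hJ; apply: NNPP => hno.
have [J0 [hJ0 hno0 hmax]] := noetherian_maximal (Pr := fun K => ~ exists Ps, prime_cover K Ps)
  (ex_intro2 _ _ J hJ hno).
apply: hno0; case: (classic (J0 1)) => h1.
  by exists nil; split => // P [_ hP1 _] /(_ 1 h1).
case: (classic (is_prime_ideal J0)) => hpr.
  exists (J0 :: nil); split => [P [<- | []] | P hP hJP]; first by split.
  by exists J0; first left.
have [a [b [hab ha hb]]] : exists a b, [/\ J0 (a * b), ~ J0 a & ~ J0 b].
  apply: NNPP => hno1; apply: hpr; split => // a b hab; apply: NNPP => h; apply: hno1.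
  by exists a, b; split => // h'; apply: h; [left | right].
have cover c : ~ J0 c -> exists Ps, prime_cover (ideal_add J0 (principal c)) Ps.
  move=> hc; apply: NNPP => hnoc.
  apply/hc/(hmax _ (ideal_add_ideal hJ0 (principal_ideal c)) hnoc).
    by move=> z; apply: ideal_addl; apply: principal_ideal.
  by apply: ideal_addr => //; apply: principal_self.
have [[Pa hPa] [Pb hPb]] := (cover a ha, cover b hb).
by exists (List.app Pa Pb); apply: prime_cover_split hJ0 hab hPa hPb.
Qed.

Lemma minimal_prime_zero_divisor Q a : is_prime_ideal Q ->
  (forall P, is_prime_ideal P -> ideal_sub P Q -> ideal_sub Q P) -> Q a ->
  exists2 y, y <> 0 & a * y = 0.
Proof.
move=> hQ hmin hQa; have [hQi hQ1 hQm] := hQ.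
case: (classic (exists s n, ~ Q s /\ s * a ^+ n = 0)) => [[s [n [hs e]]] | hno].
  by apply: (zero_divisor_of_mulrX_eq0 _ e) => hs0; apply: hs; rewrite hs0; apply: ideal0.
(* Otherwise {s a^n | s ∉ Q} misses 0; a prime missing it lies in Q and misses a, against minimality. *)
pose S z := exists s n, ~ Q s /\ z = s * a ^+ n.
have hS1 : S 1 by exists 1, 0%N; rewrite expr0 mulr1.
have hSM u v : S u -> S v -> S (u * v).
  move=> [s1 [n1 [h1 ->]]] [s2 [n2 [h2 ->]]]; exists (s1 * s2), (n1 + n2)%N.
  by split; [case/hQm | rewrite exprD; ring].
have hzero : is_ideal (fun z : R => z = 0).
  by split => // [u v -> -> | r u ->]; rewrite ?addr0 ?mulr0.
have h0S z : z = 0 -> ~ S z.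
  by move=> -> [s [n [hs e]]]; apply: hno; exists s, n; exact: conj hs (esym e).
have [P [hP _ hPS]] := exists_prime_disjoint hzero hS1 hSM h0S.
have hPQ : ideal_sub P Q.
  by move=> z hz; apply: NNPP => hnz; apply: (hPS z hz); exists z, 0%N; rewrite expr0 mulr1.
exfalso; apply: (hPS a (hmin P hP hPQ a hQa)).
by exists 1, 1%N; rewrite expr1 mul1r.
Qed.

End Noetherian.
End Primes.

Lemma exists_list_filter (T : Type) (P : T -> Prop) (l : list T) :
  exists l', forall z, List.In z l' <-> List.In z l /\ P z.
Proof.
elim: l => [|a l [l' IH]]; first by exists nil => z; split => // -[].
case: (classic (P a)) => ha; [exists (a :: l') | exists l'] => z /=; rewrite IH.
- by split => [[<- | []] | [[<- | hz] hPz]]; auto.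
- by split => [[] | [[<- | hz] hPz]]; auto.
Qed.

Lemma exists_max_nat (P : nat -> Prop) d : (exists n, P n) -> (forall n, P n -> (n <= d)%N) ->
  exists2 n, P n & forall k, P k -> (k <= n)%N.
Proof.
move=> [n0 hn0] hd.
pose b n : bool := if excluded_middle_informative (P n) then true else false.
have bP n : reflect (P n) (b n) by rewrite /b; case: excluded_middle_informative; constructor.
have [n /bP hn hmax] := ex_maxnP (ex_intro _ n0 (introT (bP n0) hn0)) (fun n => hd n \o elimT (bP n)).
by exists n => // k /bP /hmax.
Qed.

Section Dimension.
Variable R : comNzRingType.
Implicit Types (I J K P Q : R -> Prop) (C : nat -> R -> Prop).

(* dim (R / J) <= k *)
Definition dim_quot_le J k := forall C n, prime_chain C n -> ideal_sub J (C 0%N) -> (n <= k)%N.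

Lemma prime_chain0 P : is_prime_ideal P -> prime_chain (fun=> P) 0.
Proof. by split. Qed.

Lemma prime_chain_cons C n Q : prime_chain C n -> is_prime_ideal Q ->
  ideal_ssub Q (C 0%N) -> prime_chain (chain_cons Q C) n.+1.
Proof.
case=> hCi hCs hQ hQC; split.
- by case=> [|i] hi //=; apply: hCi.
- by case=> [|i] hi //=; apply: hCs.
Qed.

Lemma prime_chain_sub C n : prime_chain C n -> ideal_sub (C 0%N) (C n).
Proof.
case=> _ hCs; have sub i : (i <= n)%N -> ideal_sub (C 0%N) (C i).
  elim: i => [_ z //|i IH hi z /(IH (ltnW hi))].
  by case: (hCs i hi) => + _; apply.
exact: sub.
Qed.

Section LocalRing.
Variable m : R -> Prop.
Hypothesis hloc : local_with m.

Lemma local_max_ideal : is_ideal m.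
Proof. by case: hloc. Qed.

Lemma local_max_prime : is_prime_ideal m.
Proof.
have [hm hm1 hunit] := hloc; split => // a b hab.
case: (classic (m a)) => ha; [by left | right].
have [a' ha'] := hunit a ha.
by rewrite -[b]mul1r -ha' mulrAC; apply: idealMr.
Qed.

Lemma proper_ideal_sub_max K : is_ideal K -> ~ K 1 -> ideal_sub K m.
Proof.
have [_ _ hunit] := hloc; move=> hK hK1 z hz; apply: NNPP => /hunit [w hw].
by apply: hK1; rewrite -hw; apply: idealMr.
Qed.

Lemma length_le_max : length_le m idealT 1.
Proof.
move=> C [|[|n]] // [hCi hC0 _ hCs]; exfalso.
have [_ [y [hy1 hy2]]] := hCs 0%N erefl; rewrite hC0 in hy2.
have eC1 : C 1%N = idealT.
  apply: ideal_eqT; first exact: hCi.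
  have [_ _ hunit] := hloc; have [w <-] := hunit y hy2.
  by apply: idealMr => //; apply: hCi.
by have [_ [z [_ hz]]] := hCs 1%N erefl; apply: hz; rewrite eC1.
Qed.

Section Noetherian.
Hypothesis hN : noetherian R.

Lemma dim0_exp_mem J g : is_ideal J -> dim_quot_le J 0 -> m g -> exists n, J (g ^+ n).
Proof.
move=> hJ hdim hg; apply: NNPP => hno.
pose S z := exists n, z = g ^+ n.
have hS1 : S 1 by exists 0%N; rewrite expr0.
have hSM a b : S a -> S b -> S (a * b) by move=> [n1 ->] [n2 ->]; exists (n1 + n2)%N; rewrite exprD.
have hJS z : J z -> ~ S z by move=> hz [n ez]; apply: hno; exists n; rewrite -ez.
have [P [hP hJP hPg]] := exists_prime_disjoint hN hJ hS1 hSM hJS.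
have hPm : ideal_ssub P m.
  have [hPi hP1 _] := hP; split; first exact: proper_ideal_sub_max.
  by exists g; split => // hPg'; apply: (hPg g hPg'); exists 1%N; rewrite expr1.
by have := hdim _ _ (prime_chain_cons (prime_chain0 local_max_prime) hP hPm) hJP.
Qed.

Lemma dim0_length_finite J : is_ideal J -> dim_quot_le J 0 -> exists k, length_le J idealT k.
Proof.
move=> hJ hdim; apply: NNPP => hno.
have [K [hK [hJK hKinf] hmax]] := noetherian_maximal hN
  (Pr := fun K => ideal_sub J K /\ forall k, ~ length_le K idealT k)
  (ex_intro2 _ _ J hJ (conj (fun _ h => h) (fun k h => hno (ex_intro _ k h)))).
have hK1 : ~ K 1.
  by move=> /(ideal_eqT hK) eKT; apply: (hKinf 0%N); rewrite eKT; apply: length_leTT.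
have [hmK | /not_ideal_sub [g [hg hgK]]] := classic (ideal_sub m K).
  have eKm : K = m by apply: ideal_ext => //; apply: proper_ideal_sub_max.
  by apply: (hKinf 1%N); rewrite eKm; apply: length_le_max.
have [n hn] := dim0_exp_mem hJ hdim hg.
have [k hk] : exists k, length_le (ideal_add K (principal g)) idealT k.
  apply: NNPP => hnok; apply/hgK/(hmax _ (ideal_add_ideal hK (principal_ideal g))).
  - split; first by move=> z /hJK; apply: ideal_addl; apply: principal_ideal.
    by move=> k hk; apply: hnok; exists k.
  - by move=> z; apply: ideal_addl; apply: principal_ideal.
  - by apply: ideal_addr => //; apply: principal_self.
have eK : ideal_add K (principal (g ^+ n)) = K.
  by apply: ideal_add_idl => //; [apply: principal_ideal | apply: principal_sub => //; apply: hJK].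
by apply: (hKinf (n * k)%N); rewrite -eK; apply: length_le_principal_pow.
Qed.

(* By prime avoidance, y misses the minimal primes of J from which chains of length k+1 start. *)
Lemma exists_parameter J k : is_ideal J -> dim_quot_le J k.+1 ->
  exists y, m y /\ dim_quot_le (ideal_add J (principal y)) k.
Proof.
move=> hJ hdim; have [Ps [hPs hcover]] := exists_prime_cover hN hJ.
have [Qs hQs] := exists_list_filter (fun P => exists C, prime_chain C k.+1 /\ C 0%N = P) Ps.
have [y [hy hyQs]] : exists y, m y /\ forall Q, List.In Q Qs -> ~ Q y.
  apply: (prime_avoidance local_max_ideal) => Q /hQs [hin [C [hC eC]]].
  split; first exact: proj1 (hPs Q hin).
  have [_ /(_ 0%N erefl) [_ [z [hz1 hz2]]]] := hC; rewrite eC in hz2.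
  have [hC1i hC11 _] := proj1 hC 1%N erefl.
  by move=> hmQ; apply/hz2/hmQ; apply: (proper_ideal_sub_max hC1i hC11).
exists y; split => // C n hC hJyC.
have hJC : ideal_sub J (C 0%N).
  by move=> z hz; apply: hJyC; apply: ideal_addl => //; apply: principal_ideal.
move: (hdim C n hC hJC); rewrite leq_eqVlt => /orP [/eqP en | ]; last by rewrite ltnS.
exfalso; subst n.
have [P hin hPC] := hcover _ (proj1 hC 0%N (leq0n _)) hJC.
have [hP hJP] := hPs P hin.
case: (ideal_sub_ssub_or_eq hPC) => [hs | eP].
  by have := hdim _ _ (prime_chain_cons hC hP hs) hJP; rewrite ltnn.
have hQ : List.In P Qs by apply/hQs; split => //; exists C.
by apply: (hyQs P hQ); rewrite eP; apply: hJyC; apply: ideal_addr => //; apply: principal_self.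
Qed.

Lemma hilbert_samuel_bound k J : is_ideal J -> dim_quot_le J k ->
  exists c, forall N, length_le (ideal_add J (ideal_pow m N)) idealT (c * N.+1 ^ k)%N.
Proof.
elim: k J => [|k IH] J hJ hdim.
  have [c hc] := dim0_length_finite hJ hdim.
  exists c => N; rewrite expn0 muln1; apply: length_le_bot_sup hc => //.
  by move=> z; apply: ideal_addl; apply: ideal_pow_ideal.
have [y [hy hdimy]] := exists_parameter hJ hdim.
have [c hc] := IH _ (ideal_add_ideal hJ (principal_ideal y)) hdimy.
exists c => N; have hJN := ideal_add_ideal hJ (ideal_pow_ideal m N).
have hb : length_le (ideal_add (ideal_add J (ideal_pow m N)) (principal y)) idealT
    (c * N.+1 ^ k)%N by rewrite ideal_addAC; apply: hc.
have eJN : ideal_add (ideal_add J (ideal_pow m N)) (principal (y ^+ N)) =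
    ideal_add J (ideal_pow m N).
  apply: ideal_add_idl => //; first exact: principal_ideal.
  by apply: principal_sub => //; apply: ideal_addr => //; apply: ideal_pow_exp.
apply: length_leW (_ : length_le _ _ (N * (c * N.+1 ^ k))%N) _.
  by rewrite -eJN; apply: length_le_principal_pow.
by rewrite expnS mulnCA leq_mul2l leq_mul2r leqnSn !orbT.
Qed.

End Noetherian.
End LocalRing.

Section KrullDimension.
Variable d : nat.
Hypotheses (hN : noetherian R) (hdim : krull_dim R d).

Lemma exists_minimal_prime_sub P0 : is_prime_ideal P0 -> exists Q, [/\ is_prime_ideal Q,
  ideal_sub Q P0 & forall P, is_prime_ideal P -> ideal_sub P Q -> ideal_sub Q P].
Proof.
move=> hP0; have [k [C [hC eC]] hmax] :=
  exists_max_nat (P := fun k => exists C, prime_chain C k /\ C k = P0)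
    (ex_intro _ 0%N (ex_intro _ (fun=> P0) (conj (prime_chain0 hP0) erefl)))
    (fun n '(ex_intro C (conj hC _)) => proj2 hdim C n hC).
exists (C 0%N); split; first exact: proj1 hC 0%N (leq0n _).
  by rewrite -eC; apply: prime_chain_sub hC.
move=> P hP hPC; apply: NNPP => /not_ideal_sub [z [hz hPz]].
have hPC0 : ideal_ssub P (C 0%N) by split => //; exists z.
by have := hmax k.+1 (ex_intro _ (chain_cons P C) (conj (prime_chain_cons hC hP hPC0) eC)); rewrite ltnn.
Qed.

Lemma nzd_dim_quot_lt x : (forall y, x * y = 0 -> y = 0) ->
  forall C n, prime_chain C n -> ideal_sub (principal x) (C 0%N) -> (n < d)%N.
Proof.
move=> hx C n hC hxC; have [Q [hQ hQC hmin]] := exists_minimal_prime_sub (proj1 hC 0%N (leq0n _)).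
have hQx : ~ Q x by move=> /(minimal_prime_zero_divisor hN hQ hmin) [y hy /hx].
have hQC0 : ideal_ssub Q (C 0%N).
  by split => //; exists x; split => //; apply: hxC; apply: principal_self.
exact: proj2 hdim _ _ (prime_chain_cons hC hQ hQC0).
Qed.

End KrullDimension.
End Dimension.

Lemma int_diff_le_exprz (a b g q d : nat) : (a <= b + g * q ^ d)%N ->
  ((a%:Z - b%:Z)%:~R : rat) <= g%:R * (q%:R : rat) ^ (d.+1%:Z - 1).
Proof.
move=> h; have -> : (d.+1%:Z - 1 = d%:Z)%R by lia.
rewrite -exprnP -natrX -natrM -[X in _ <= X]/((g * q ^ d)%N%:Z%:~R) ler_int; lia.
Qed.

Lemma expn_mulS_le a b d : (0 < b)%N -> ((a * b).+1 ^ d <= (a + 1) ^ d * b ^ d)%N.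
Proof.
move=> hb; rewrite -expnMn; elim: d => // d IH.
by rewrite !expnS leq_mul // mulnDl mul1n -addn1 leq_add2l.
Qed.

Theorem mainTheorem19 (R : comNzRingType) (m : R -> Prop) (d p c : nat)
  (I L : nat -> R -> Prop) (x : R)
  (hnoeth : noetherian R) (hloc : local_with m) (hdim : krull_dim R d)
  (hp : prime p) (hchar : p \in [pchar R])
  (hc : (0 < c)%N)
  (hI : forall e, is_ideal (I e))
  (hmI : forall e, ideal_sub (ideal_pow m (c * p ^ e)) (I e))
  (hx : forall y, x * y = 0 -> y = 0)
  (hL : forall e, is_ideal (L e))
  (hIL : forall e, ideal_sub (I e) (L e))
  (hLc : forall e, ideal_sub (L e) (colon (I e) x)) :
  exists gamma : rat, 0 < gamma /\
    forall (e lI lL : nat), length_quot (I e) lI -> length_quot (L e) lL ->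
      ((lI%:Z - lL%:Z)%:~R : rat) <= gamma * ((p ^ e)%N%:R : rat) ^ (d%:Z - 1).
Proof.
pose J e := ideal_add (principal x) (ideal_pow m (c * p ^ e)).
have hJ e : is_ideal (J e) := ideal_add_ideal (principal_ideal x) (ideal_pow_ideal _ _).
have diff_le e lI lL k : length_quot (I e) lI -> length_quot (L e) lL ->
    length_le (J e) idealT k -> (lI <= lL + k)%N.
  move=> hlI hlL hk; apply: (length_quot_le_colon (hI e) (hL e) (hIL e) (hLc e) hlI hlL).
  apply: length_le_bot_sup hk => //; apply: ideal_add_sub => [||z /hmI].
  - exact: ideal_add_ideal (hI e) (principal_ideal x).
  - by move=> z; apply: ideal_addr (hI e).
  - by apply: ideal_addl; apply: principal_ideal.
have hxd := nzd_dim_quot_lt hnoeth hdim hx.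
case: d hdim hxd => [|d] hdim hxd.
  have [w hxw] : exists w, x * w = 1.
    have [_ _ hunit] := hloc; apply: hunit => /(principal_sub (local_max_ideal hloc)).
    by move/(hxd _ _ (prime_chain0 (local_max_prime hloc))).
  exists 1; split => // e lI lL hlI hlL.
  rewrite mul1r; apply: le_trans (exprz_ge0 _ (ler0n _ _)).
  have JT : J e = idealT.
    by apply: (ideal_eqT (hJ e)); apply: ideal_addl; [exact: ideal_pow_ideal | exists w; rewrite mulrC].
  have := diff_le e lI lL 0%N hlI hlL; rewrite JT addn0 => /(_ length_leTT) ?.
  by rewrite -(mulr0z 1) ler_int; lia.
have [k hk] := hilbert_samuel_bound hloc hnoeth (principal_ideal x) hxd.
exists (k * (c + 1) ^ d).+1%:R; split => // e lI lL hlI hlL.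
apply/int_diff_le_exprz/(leq_trans (diff_le e lI lL _ hlI hlL (hk _))).
rewrite leq_add2l (leq_trans _ (leq_mul (leqnSn _) (leqnn _))) // -mulnA leq_mul2l.
by rewrite expn_mulS_le ?orbT // expn_gt0 prime_gt0.
Qed.
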